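(* Let $R$ be a commutative ring with identity, $I,J$ ideals of $R$, and $M$ a progenerator $R$-module (a finitely generated projective generator of the category of $R$-modules). If $M$ is $I$-coreduced, then $M$ is $I$-reduced. If $M$ is $(I,J)$-coprime, then $M$ is $(I,J)$-prime.
   Context: All rings are commutative with identity and modules are unital. An $R$-module $M$ is $I$-reduced if for all $m\in M$, $I^2m=0$ implies $Im=0$; $I$-coreduced if $IM=I^2M$; $(I,J)$-prime if for all $m\in M$, $IJm=0$ implies $Im=0$ or $Jm=0$; $(I,J)$-coprime if $IJM=IM$ or $IJM=JM$. *)

From HB Require Import structures.
From mathcomp Require Import all_boot all_order all_algebra.
Set Implicit Arguments. Unset Strict Implicit. Unset Printing Implicit Defensive.
Import GRing.Theory.
Local Open Scope ring_scope.

Definition is_ideal (R : comPzRingType) (I : R -> Prop) : Prop :=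
  [/\ I 0, (forall a b, I a -> I b -> I (a + b)) & (forall r a, I a -> I (r * a))].

Definition prod_ideal (R : comPzRingType) (I J : R -> Prop) : R -> Prop :=
  fun x => exists n (a b : 'I_n -> R),
    [/\ forall i, I (a i), forall i, J (b i) & x = \sum_(i < n) a i * b i].

Definition ideal_submod (R : comPzRingType) (I : R -> Prop) (M : lmodType R)
  : M -> Prop :=
  fun m => exists n (a : 'I_n -> R) (v : 'I_n -> M),
    (forall i, I (a i)) /\ m = \sum_(i < n) a i *: v i.

Definition annihilated (R : comPzRingType) (I : R -> Prop) (M : lmodType R)
  (m : M) : Prop := forall a, I a -> a *: m = 0.

Definition I_reduced (R : comPzRingType) (I : R -> Prop) (M : lmodType R) :=
  forall m : M, annihilated (prod_ideal I I) m -> annihilated I m.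

Definition I_coreduced (R : comPzRingType) (I : R -> Prop) (M : lmodType R) :=
  forall m : M, ideal_submod I m <-> ideal_submod (prod_ideal I I) m.

Definition IJ_prime (R : comPzRingType) (I J : R -> Prop) (M : lmodType R) :=
  forall m : M, annihilated (prod_ideal I J) m ->
    annihilated I m \/ annihilated J m.

Definition IJ_coprime (R : comPzRingType) (I J : R -> Prop) (M : lmodType R) :=
  (forall m : M, ideal_submod (prod_ideal I J) m <-> ideal_submod I m) \/
  (forall m : M, ideal_submod (prod_ideal I J) m <-> ideal_submod J m).

Definition fin_generated (R : comPzRingType) (M : lmodType R) : Prop :=
  exists n (v : 'I_n -> M), forall m : M,
    exists c : 'I_n -> R, m = \sum_(i < n) c i *: v i.

Definition projective_mod (R : comPzRingType) (M : lmodType R) : Prop :=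
  forall (N P : lmodType R) (f : {linear N -> P}) (g : {linear M -> P}),
    (forall p : P, exists n : N, f n = p) ->
    exists h : {linear M -> N}, forall m : M, f (h m) = g m.

Definition generator_mod (R : comPzRingType) (M : lmodType R) : Prop :=
  forall (N : lmodType R) (x : N),
    exists n (f : 'I_n -> {linear M -> N}) (v : 'I_n -> M),
      x = \sum_(i < n) f i (v i).

Definition progenerator (R : comPzRingType) (M : lmodType R) : Prop :=
  [/\ fin_generated M, projective_mod M & generator_mod M].

From mathcomp Require Import all_boot all_order all_algebra.
Set Implicit Arguments. Unset Strict Implicit. Unset Printing Implicit Defensive.
Import GRing.Theory.
Local Open Scope ring_scope.

(* Since M is a generator, 1 = sum_i f_i(v_i) for some linear maps f_i : M -> R.
   If K M is contained in K' M, then for a in K each a v_i is a K'-combination of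
   elements of M, hence a = sum_i f_i(a v_i) lies in the ideal generated by K'.
   So anything killed by K' is killed by K.  Coreducedness (I M = I^2 M) and
   coprimality (IJ M = I M or IJ M = J M) give exactly such inclusions;
   only the generator property of M is used. *)

Section IdealSubmodule.

Variables (R : comPzRingType) (K : R -> Prop).

Lemma ideal_submod0 (M : lmodType R) : ideal_submod K (0 : M).
Proof. by exists 0%N, (fun=> 0), (fun=> 0); split; [case | rewrite big_ord0]. Qed.

Lemma ideal_submodD (M : lmodType R) (x y : M) :
  ideal_submod K x -> ideal_submod K y -> ideal_submod K (x + y).
Proof.
move=> [n [a [v [Ka ->]]]] [p [b [w [Kb ->]]]].
exists (n + p)%N, (fun k => match split k with inl i => a i | inr j => b j end).
exists (fun k => match split k with inl i => v i | inr j => w j end); split.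
  by move=> k; case: split.
rewrite big_split_ord /=; congr (_ + _); apply: eq_bigr => i _.
  by rewrite (unsplitK (inl i)).
by rewrite (unsplitK (inr i)).
Qed.

Lemma ideal_submod_sum (M : lmodType R) n (F : 'I_n -> M) :
  (forall i, ideal_submod K (F i)) -> ideal_submod K (\sum_(i < n) F i).
Proof.
move=> KF; apply: (big_ind (@ideal_submod R K M)) => //.
  exact: ideal_submod0.
exact: ideal_submodD.
Qed.

Lemma ideal_submod_linear (M N : lmodType R) (f : {linear M -> N}) (x : M) :
  ideal_submod K x -> ideal_submod K (f x).
Proof.
move=> [n [a [v [Ka ->]]]]; exists n, a, (f \o v); split=> //.
by rewrite linear_sum; apply: eq_bigr => i _; rewrite linearZ.
Qed.

Lemma annihilated_ideal_submod (M : lmodType R) (m : M) (r : R^o) :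
  annihilated K m -> ideal_submod K r -> r *: m = 0.
Proof.
move=> Km [n [a [v [Ka ->]]]]; rewrite scaler_suml; apply: big1 => i _.
have -> : (a i *: v i : R^o) = v i * a i by rewrite mulrC.
by rewrite -scalerA Km ?scaler0.
Qed.

End IdealSubmodule.

Lemma generator_ideal_sub (R : comPzRingType) (K K' : R -> Prop)
    (M : lmodType R) :
  generator_mod M ->
  (forall m : M, ideal_submod K m -> ideal_submod K' m) ->
  forall a, K a -> ideal_submod K' (a : R^o).
Proof.
move=> genM KK' a Ka.
have [n [f [v one_eq]]] := genM R^o 1.
have -> : (a : R^o) = \sum_(i < n) f i (a *: v i).
  by rewrite -{1}[a]mulr1 one_eq mulr_sumr; apply: eq_bigr => i _; rewrite linearZ.
apply: ideal_submod_sum => i; apply: ideal_submod_linear; apply: KK'.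
by exists 1%N, (fun=> a), (fun=> v i); rewrite big_ord1.
Qed.

Lemma generator_annihilated (R : comPzRingType) (K K' : R -> Prop)
    (M : lmodType R) :
  generator_mod M ->
  (forall m : M, ideal_submod K m -> ideal_submod K' m) ->
  forall m : M, annihilated K' m -> annihilated K m.
Proof.
move=> genM KK' m K'm a Ka.
exact: annihilated_ideal_submod K'm (generator_ideal_sub genM KK' Ka).
Qed.

Theorem mainTheorem8 (R : comPzRingType) (I J : R -> Prop) (M : lmodType R) :
  is_ideal I -> is_ideal J -> progenerator M ->
  (I_coreduced I M -> I_reduced I M) /\ (IJ_coprime I J M -> IJ_prime I J M).
Proof.
move=> _ _ [_ _ genM]; split.
  by move=> coredM m; apply: generator_annihilated genM _ m => x /coredM.
move=> [coprimeM|coprimeM] m IJm; [left|right];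
  by apply: generator_annihilated genM _ m IJm => x /coprimeM.
Qed.
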